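(* Let $p$ be a binary word of length $l\ge1$ with $r$ runs. For every $n\ge 0$, $$B_{n,p}(1)=\binom{n-r+1}{l-r+1}.$$
   Context: Binary words, occurrences, $c_p(w)$ (number of occurrences of $p$ as a subsequence of $w$, i.e. number of index tuples $i_1<\cdots<i_l$ with $w_{i_1}\cdots w_{i_l}=p$) and $B_{n,p}(k)=\#\{w\in\{0,1\}^n: c_p(w)=k\}$. A run of a word is a maximal block of consecutive equal letters; its size is its length. Convention: $\binom{a}{b}=0$ unless $0\le b\le a$. *)

From mathcomp Require Import all_boot.
Set Implicit Arguments. Unset Strict Implicit. Unset Printing Implicit Defensive.

(* c_p(w): number of occurrences of p as a subsequence of w, i.e. number of
   index sets i_1 < ... < i_l with w_{i_1}...w_{i_l} = p.  An index set is
   encoded by its characteristic bit mask m of length |w|, and the selected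
   subword is [mask m w]. *)
Definition occ (p w : seq bool) : nat :=
  #|[set m : (size w).-tuple bool | mask m w == p]|.

Definition runs (p : seq bool) : nat :=
  match p with
  | [::] => 0
  | x :: s => (count id (pairmap (fun a b => a != b) x s)).+1
  end.

Definition Bnp (n : nat) (p : seq bool) (k : nat) : nat :=
  #|[set w : n.-tuple bool | occ p w == k]|.

From mathcomp Require Import all_boot zify.

(* With F_n(p) the number of words of length n with exactly
      one occurrence of p, and K_n(x,q) the number of those with exactly one
      occurrence of q and none of x::q, splitting on the first letter gives
        F_{n+1}(x::q) = K_n(x,q) + F_n(x::q),      K_n(x,[]) = 1,
        K_n(x, x::q) = F_n(x::q),    K_{n+1}(x, ~x::q) = K_n(~x, q).
   4. Induction on the pattern solves these recurrences in binomials; the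
      theorem is the closed form for F. *)

Fixpoint words (n : nat) : seq (seq bool) :=
  if n is n'.+1 then map (cons true) (words n') ++ map (cons false) (words n')
  else [:: [::]].

Lemma cons_inj (b : bool) : injective (cons b).
Proof. by move=> v w []. Qed.

Lemma words_uniq n : uniq (words n).
Proof.
elim: n => [//|n IH] /=.
rewrite cat_uniq !map_inj_uniq ?IH //=; try exact: cons_inj; rewrite andbT.
by apply/hasPn => _ /mapP [w _ ->]; apply/mapP => [[v _]].
Qed.

Lemma mem_words n w : (w \in words n) = (size w == n).
Proof.
elim: n w => [|n IH] [|b w] //=; rewrite mem_cat.
  by apply/norP; split; apply/mapP => [[v _]].
case: b; rewrite (mem_map (cons_inj _)) IH.
- by apply/orb_idr => /mapP [v _].
- by apply/orb_idl => /mapP [v _].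
Qed.

Lemma card_tuple_words n (P : pred (seq bool)) :
  #|[set w : n.-tuple bool | P w]| = count P (words n).
Proof.
rewrite -sum1_card (eq_bigl (fun w : n.-tuple bool => P w)) => [|w]; last by rewrite inE.
rewrite sum1_count -(count_map val P).
apply/permP: P; apply: uniq_perm.
- by rewrite map_inj_uniq ?index_enum_uniq //; apply: val_inj.
- exact: words_uniq.
- move=> w; rewrite mem_words; apply/mapP/idP => [[t _ ->]|/eqP sz_w].
    by rewrite size_tuple.
  by exists (Tuple (introT eqP sz_w)); rewrite ?mem_index_enum.
Qed.

Lemma count_words_succ n x (P : pred (seq bool)) :
  count P (words n.+1) =
  count (fun w => P (x :: w)) (words n) + count (fun w => P (~~ x :: w)) (words n).
Proof. by rewrite /= count_cat !count_map; case: x => //; rewrite addnC. Qed.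

Fixpoint subocc (p w : seq bool) : nat :=
  match p, w with
  | [::], _ => 1
  | _ :: _, [::] => 0
  | x :: p', y :: w' => (x == y) * subocc p' w' + subocc p w'
  end.

Lemma subocc_nil w : subocc [::] w = 1.
Proof. by case: w. Qed.

Lemma occE p w : occ p w = subocc p w.
Proof.
rewrite /occ (card_tuple_words (size w) (fun m => mask m w == p)).
elim: w p => [|y w IH] [|x p] //=; rewrite count_cat !count_map.
  rewrite (eq_count (a2 := xpred0)) // count_pred0 (IH [::]) subocc_nil.
  by case: w {IH}.
rewrite -!IH; congr (_ + _).
rewrite (eq_count (a2 := fun m => (x == y) && (mask m w == p))); last first.
  by move=> m /=; rewrite eqseq_cons eq_sym.
by case: (x == y); rewrite ?mul1n ?mul0n ?count_pred0.
Qed.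

Lemma subocc_match x q w : subocc (x :: q) (x :: w) = subocc q w + subocc (x :: q) w.
Proof. by rewrite /= eqxx mul1n. Qed.

Lemma subocc_mismatch x y q w : x != y -> subocc (x :: q) (y :: w) = subocc (x :: q) w.
Proof. by move=> /negPf /= ->. Qed.

Lemma neq_negb (x : bool) : x != ~~ x.
Proof. by case: x. Qed.

Lemma subocc_suffix q y w : subocc q w <= subocc q (y :: w).
Proof. by case: q => [|x q]; [rewrite !subocc_nil | exact: leq_addl]. Qed.

Lemma subocc_behead x q w : 0 < subocc (x :: q) w -> 0 < subocc q w.
Proof.
elim: w => [//|y w IH] /=.
have le_qw := subocc_suffix q y w.
case: (x == y); rewrite ?mul1n ?mul0n ?add0n; last first.
  by move/IH => q_pos; apply: leq_trans le_qw.
case: (posnP (subocc q w)) => [qw0|q_pos _]; last exact: leq_trans q_pos le_qw.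
by rewrite qw0 add0n => /IH; rewrite qw0.
Qed.

Lemma subocc_double x q w : subocc (x :: q) w = 1 -> subocc (x :: x :: q) w = 0.
Proof.
elim: w => [//|y w IH] /=.
case: eqP => _; rewrite ?mul1n ?mul0n ?add0n; last exact: IH.
have sub_pos := @subocc_behead x.
case: (posnP (subocc (x :: q) w)) => [xq0|xq_pos]; last by have := sub_pos _ _ xq_pos; lia.
by case: (posnP (subocc (x :: x :: q) w)) => [-> | /sub_pos]; lia.
Qed.

(* Arithmetic core of both recurrences below: along a chain of positivity
   implications, a sum equal to one forces the later terms to vanish. *)
Lemma chain_sum_one (a b c : nat) : (0 < b -> 0 < a) -> (0 < c -> 0 < b) ->
  ((a + b == 1) && (c == 0)) = ((a == 1) && (b == 0)).
Proof. by move=> ba cb; apply/andP/andP => -[/eqP ? /eqP ?]; split; apply/eqP; lia. Qed.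

Definition unique_occ (n : nat) (p : seq bool) : nat :=
  count (fun w => subocc p w == 1) (words n).

Definition unique_avoid (n : nat) (x : bool) (q : seq bool) : nat :=
  count (fun w => (subocc q w == 1) && (subocc (x :: q) w == 0)) (words n).

(* A word with a unique occurrence of x::q either starts with x, followed by
   a word in K_n(x,q), or starts with ~x, followed by a word in F_n(x::q). *)
Lemma unique_occ_succ n x q :
  unique_occ n.+1 (x :: q) = unique_avoid n x q + unique_occ n (x :: q).
Proof.
rewrite /unique_occ (count_words_succ _ x); congr (_ + _); apply: eq_count => w.
  rewrite subocc_match -[_ == 1]andbT (chain_sum_one _ _ 0) //.
  exact: subocc_behead.
by rewrite subocc_mismatch ?neq_negb.
Qed.

(* Only the constant word ~x...~x contains no x. *)
Lemma unique_avoid_nil n x : unique_avoid n x [::] = 1.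
Proof.
elim: n => [|n IH]; first by case: x.
rewrite /unique_avoid (count_words_succ _ x) (eq_count (a2 := xpred0)) => [|w]; last first.
  by rewrite subocc_match !subocc_nil.
rewrite count_pred0 -[RHS]IH; apply: eq_count => w.
by rewrite subocc_mismatch ?neq_negb // !subocc_nil.
Qed.

(* A unique occurrence of x::q never extends to an occurrence of x::x::q. *)
Lemma unique_avoid_same n x q : unique_avoid n x (x :: q) = unique_occ n (x :: q).
Proof. by apply: eq_count => w; case: eqP => // /subocc_double ->. Qed.

(* A word in K_{n+1}(x, ~x::q) must start with ~x (a leading x would extend
   the occurrence of ~x::q), and the rest is a word in K_n(~x, q). *)
Lemma unique_avoid_alt n x q :
  unique_avoid n.+1 x (~~ x :: q) = unique_avoid n (~~ x) q.
Proof.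
rewrite /unique_avoid (count_words_succ _ x).
rewrite (eq_count (a2 := xpred0)) => [|w]; last first.
  rewrite subocc_mismatch ?subocc_match; last by rewrite eq_sym neq_negb.
  by apply/negbTE/andP => -[/eqP -> /eqP].
rewrite count_pred0; apply: eq_count => w; rewrite subocc_match subocc_mismatch ?neq_negb //.
by apply: chain_sum_one => /subocc_behead.
Qed.

Lemma runs_cons_cons x y q : runs [:: x, y & q] = (x != y) + runs (y :: q).
Proof. by rewrite /= addnS. Qed.

Lemma runs_le_size x q : runs (x :: q) <= (size q).+1.
Proof.
elim: q x => [//|y q IH] x; rewrite runs_cons_cons /=.
by have := IH y; case: (x != y) => /=; lia.
Qed.

(* The binomial identities that drive the induction; r plays the number of
   runs of a pattern of length l.+1. *)
Lemma binom_runs_empty r l : 0 < r -> r <= l.+1 -> 'C(1 - r, l.+2 - r) = 0.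
Proof.
move=> r_gt0 r_le; have -> : 1 - r = 0 by lia.
by have -> : l.+2 - r = (l.+1 - r).+1 by lia.
Qed.

Lemma binom_runs_pascal r l n : 0 < r -> r <= l.+1 ->
  'C(n.+2 - r, l.+2 - r) =
  (if r <= n.+1 then 'C(n.+1 - r, l.+1 - r) else 0) + 'C(n.+1 - r, l.+2 - r).
Proof.
move=> r_gt0 r_le; have -> : l.+2 - r = (l.+1 - r).+1 by lia.
case: leqP => r_n.
- have -> : n.+2 - r = (n.+1 - r).+1 by lia.
  by rewrite binS addnC.
- have -> : n.+2 - r = 0 by lia.
  by have -> : n.+1 - r = 0 by lia.
Qed.

Definition unique_avoid_closed (n : nat) (x : bool) (q : seq bool) : nat :=
  let r := runs (x :: q) in
  if r <= n.+1 then 'C(n.+1 - r, (size q).+1 - r) else 0.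

Definition unique_occ_closed (n : nat) (x : bool) (q : seq bool) : nat :=
  let r := runs (x :: q) in 'C(n.+1 - r, (size q).+2 - r).

Lemma unique_occ_from_avoid x q :
  (forall n, unique_avoid n x q = unique_avoid_closed n x q) ->
  forall n, unique_occ n (x :: q) = unique_occ_closed n x q.
Proof.
move=> avoidE; have r_le := runs_le_size x q.
elim=> [|n IH]; first by rewrite /unique_occ_closed binom_runs_empty.
by rewrite unique_occ_succ IH avoidE /unique_occ_closed /unique_avoid_closed binom_runs_pascal.
Qed.

(* Solving the K-recurrences by induction on the pattern: a repeated first
   letter keeps the number of runs, an alternation adds one. *)
Lemma unique_avoid_closedE x q n : unique_avoid n x q = unique_avoid_closed n x q.
Proof.
elim: q x n => [|y q IH] x n; first by rewrite unique_avoid_nil /unique_avoid_closed bin0.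
have r_le := runs_le_size y q.
rewrite /unique_avoid_closed runs_cons_cons.
have [<-|y_neq] := eqVneq y x.
  rewrite unique_avoid_same (unique_occ_from_avoid _ _ (IH y)) /unique_occ_closed add0n.
  have [//|r_n] := leqP (runs (y :: q)) n.+1.
  have -> : n.+1 - runs (y :: q) = 0 by lia.
  by rewrite bin0n; apply/eqP; lia.
have -> : y = ~~ x by move: y_neq; case: (x); case: (y).
rewrite add1n ltnS.
by case: n => [|n] //; rewrite unique_avoid_alt IH.
Qed.

Theorem mainTheorem2 (p : seq bool) (n : nat) :
  1 <= size p ->
  Bnp n p 1 = 'C(n + 1 - runs p, size p + 1 - runs p).
Proof.
case: p => [//|x q] _.
have -> : Bnp n (x :: q) 1 = unique_occ n (x :: q).
  rewrite /Bnp (card_tuple_words n (fun w => occ (x :: q) w == 1)).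
  by apply: eq_count => w; rewrite /= occE.
by rewrite (unique_occ_from_avoid _ _ (unique_avoid_closedE x q)) !addn1.
Qed.
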